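(* A real symmetric $n\times n$ matrix $A$ is symmetrically tropically singular if and only if there are two cycle-distinct permutations $\sigma,\tau\in S_n$ that both realize the tropical determinant of $A$.
   Context: For a real $n\times n$ matrix $A$, its tropical determinant is $\min_{\sigma\in S_n}\sum_{i=1}^n A_{i,\sigma(i)}$, and $\sigma$ realizes it if $\sum_i A_{i,\sigma(i)}$ equals this minimum. Two permutations are cycle-similar if their disjoint cycle decompositions agree up to replacing some cycles by their inverses; otherwise they are cycle-distinct. A real symmetric $n\times n$ matrix $A$ is symmetrically tropically singular if, among the monomials $\prod_{i}X_{i,\sigma(i)}$ ($\sigma\in S_n$) in commuting variables subject to the identification $X_{i,j}=X_{j,i}$, with value $\sum_i A_{i,\sigma(i)}$, the minimum value is attained by at least two distinct monomials (distinct after the identification). *)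

From HB Require Import structures.
From mathcomp Require Import all_boot all_order all_fingroup all_algebra.
Set Implicit Arguments. Unset Strict Implicit. Unset Printing Implicit Defensive.
Import Order.TTheory GRing.Theory Num.Theory.
Local Open Scope ring_scope.

Section TropDefs.
Variables (R : realFieldType) (n : nat).

Definition perm_weight (A : 'M[R]_n) (s : 'S_n) : R := \sum_(i < n) A i (s i).

Definition realizes_tdet (A : 'M[R]_n) (s : 'S_n) : Prop :=
  forall t : 'S_n, perm_weight A s <= perm_weight A t.

Definition cycle_fun (s : 'S_n) (C : {set 'I_n}) : {ffun 'I_n -> 'I_n} :=
  [ffun x => if x \in C then s x else x].

Definition cycle_decomp (s : 'S_n) : {set {ffun 'I_n -> 'I_n}} :=
  [set cycle_fun s C | C in porbits s & 1 < #|C|]%N.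

(* t is obtained from s by replacing the cycles of s in S by their inverses *)
Definition cycle_similar (s t : 'S_n) : Prop :=
  exists S : {set {set 'I_n}},
    cycle_decomp t =
    [set cycle_fun (if C \in S then s^-1 else s)%g C | C in porbits s & 1 < #|C|]%N.

Definition cycle_distinct (s t : 'S_n) : Prop := ~ cycle_similar s t.

(* the monomial prod_i X_{i, s i} modulo X_{ij} = X_{ji}: the multiplicity of
   each unordered pair {i, j} (a 1- or 2-element set) *)
Definition sym_monomial (s : 'S_n) : {ffun {set 'I_n} -> nat} :=
  [ffun e => #|[set i | [set i; s i] == e]|].

Definition sym_trop_singular (A : 'M[R]_n) : Prop :=
  exists s t : 'S_n,
    [/\ realizes_tdet A s, realizes_tdet A t & sym_monomial s != sym_monomial t].

End TropDefs.

From HB Require Import structures.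
From mathcomp Require Import all_boot all_order all_fingroup all_algebra.
Import Order.TTheory GRing.Theory Num.Theory.

(* The monomial of a permutation s records the multiset of unordered edges
   {i, s i}. Reversing some cycles of s keeps every edge, so cycle-similar
   permutations have the same monomial. Conversely, if s and t have the same
   monomial then t x is s x or s^-1 x for every x, and on a cycle of length at
   least 3 agreeing with s at one point forces agreement along the whole cycle,
   since otherwise t would use an edge twice that s uses once; so t is s with
   some cycles reversed. Hence "distinct monomials" and "cycle-distinct" are the
   same condition on a pair of realizing permutations. *)

Set Implicit Arguments. Unset Strict Implicit.

Lemma set2_inj (T : finType) (a b c d : T) :
  [set a; b] = [set c; d] -> (a = c /\ b = d) \/ (a = d /\ b = c).
Proof.
move=> E; have mem y : (y \in [set a; b]) = (y \in [set c; d]) by rewrite E.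
have /set2P[ac|ad] : a \in [set c; d] by rewrite -mem set21.
all: have /set2P[bc|bd] : b \in [set c; d] by rewrite -mem set22.
- have /set2P dab : d \in [set a; b] by rewrite mem set22.
  by left; split; case: dab; congruence.
- by left.
- by right.
- have /set2P cab : c \in [set a; b] by rewrite mem set21.
  by right; split; case: cab; congruence.
Qed.

Section ReverseCycles.
Variable n : nat.
Implicit Types (s t : 'S_n) (S : {set {set 'I_n}}) (x y : 'I_n).
Local Open Scope group_scope.

Lemma porbit_next s x : porbit s (s x) = porbit s x.
Proof. by have := porbit_perm s 1 x; rewrite expg1. Qed.

Lemma porbit_prev s x : porbit s (s^-1 x) = porbit s x.
Proof. by rewrite -!(porbitV s) porbit_next. Qed.

Lemma porbit_mem_eq s x y : y \in porbit s x -> porbit s y = porbit s x.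
Proof. by rewrite -eq_porbit_mem => /eqP. Qed.

Lemma porbit_eq_on s t x : {in porbit s x, t =1 s} -> porbit t x = porbit s x.
Proof.
move=> ts; have iter_ts i : (t ^+ i) x = (s ^+ i) x.
  elim: i => [|i IHi]; first by rewrite !expg0.
  by rewrite !expgSr !permM IHi ts // mem_porbit.
by apply/porbit_setP => y; apply/porbitP/porbitP => -[i ->]; exists i.
Qed.

Lemma porbitwise_inj s S (u v : 'S_n) :
    (forall x, porbit s (u x) = porbit s x) ->
    (forall x, porbit s (v x) = porbit s x) ->
  injective (fun x => if porbit s x \in S then u x else v x).
Proof.
move=> su sv x y.
case Sx: (porbit s x \in S); case Sy: (porbit s y \in S); try exact: perm_inj.
- by move=> E; move: Sx; rewrite -su E sv Sy.
- by move=> E; move: Sy; rewrite -su -E sv Sx.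
Qed.

Definition reverse_cycles_fun s S x := if porbit s x \in S then s^-1 x else s x.

Lemma reverse_cycles_fun_inj s S : injective (reverse_cycles_fun s S).
Proof. exact: porbitwise_inj (porbit_prev s) (porbit_next s). Qed.

Definition reverse_cycles s S : 'S_n := perm (@reverse_cycles_fun_inj s S).

Lemma reverse_cyclesE s S x :
  reverse_cycles s S x = if porbit s x \in S then s^-1 x else s x.
Proof. by rewrite permE. Qed.

Lemma cycle_decomp_at s f x : f \in cycle_decomp s -> f x != x -> f x = s x.
Proof.
case/imsetP=> C _ ->; rewrite ffunE.
by case: ifP => // _; rewrite eqxx.
Qed.

Lemma cycle_fun_porbit_decomp s x :
  s x != x -> cycle_fun s (porbit s x) \in cycle_decomp s.
Proof.
move=> sx; apply: imset_f; rewrite inE imset_f //=.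
apply/card_gt1P; exists x, (s x); rewrite porbit_id eq_sym sx.
by have := mem_porbit s 1 x; rewrite expg1.
Qed.

Lemma cycle_decomp_inj : injective (@cycle_decomp n).
Proof.
move=> s t st; apply/permP => x.
have moved u v : cycle_decomp u = cycle_decomp v -> u x != x -> v x = u x.
  move=> uv ux; have := cycle_fun_porbit_decomp ux.
  by rewrite uv => /(@cycle_decomp_at v _ x); rewrite ffunE porbit_id => /(_ ux).
have [sx|sx] := eqVneq (s x) x; last by rewrite (moved s t).
have [tx|tx] := eqVneq (t x) x; first by rewrite sx tx.
by rewrite (moved t s).
Qed.

Lemma cycle_decomp_reverse s S :
  cycle_decomp (reverse_cycles s S) =
  [set cycle_fun (if C \in S then s^-1 else s) C | C in porbits s & 1 < #|C|]%N.
Proof.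
set r := reverse_cycles s S.
pose g x := if porbit s x \in S then s^-1 else s.
have r_on x : {in porbit s x, r =1 g x}.
  by move=> y /porbit_mem_eq sy; rewrite reverse_cyclesE /g sy; case: ifP.
have porbit_r x : porbit r x = porbit s x.
  have porbit_g : porbit (g x) x = porbit s x by rewrite /g; case: ifP; rewrite ?porbitV.
  by rewrite (@porbit_eq_on (g x)) // porbit_g; apply: r_on.
rewrite /cycle_decomp (_ : porbits r = porbits s); last exact: eq_imset.
apply: eq_in_imset => _ /setIdP[/imsetP[x _ ->] _]; apply/ffunP => y.
by rewrite !ffunE; case: ifP => // /r_on.
Qed.

Lemma cycle_similarP s t :
  cycle_similar s t <-> exists S, t = reverse_cycles s S.
Proof.
split=> [[S st] | [S ->]]; exists S; last exact: cycle_decomp_reverse.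
by apply: cycle_decomp_inj; rewrite cycle_decomp_reverse.
Qed.

Lemma sym_monomial_reverse s S : sym_monomial (reverse_cycles s S) = sym_monomial s.
Proof.
apply/ffunP => e; rewrite !ffunE.
pose phi x := if porbit s x \in S then s^-1 x else (1 : 'S_n) x.
have phi_inj : injective phi.
  by apply: porbitwise_inj (porbit_prev s) _ => x; rewrite perm1.
rewrite -[RHS](card_preimset _ phi_inj); apply: eq_card => i; rewrite !inE.
by rewrite reverse_cyclesE /phi; case: ifP; rewrite ?perm1 // permKV setUC.
Qed.

Section SameMonomial.
Variables s t : 'S_n.
Hypothesis st : sym_monomial s = sym_monomial t.

Lemma sym_monomial_step x : t x = s x \/ t x = s^-1 x.
Proof.
have : (0 < sym_monomial s [set x; t x])%N.
  by rewrite st ffunE card_gt0; apply/set0Pn; exists x; rewrite inE.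
rewrite ffunE card_gt0 => /set0Pn[i]; rewrite inE => /eqP/set2_inj[[<- <-]|[<- six]].
  by left.
by right; rewrite -six permK.
Qed.

Lemma sym_monomial_next z : t z = s z -> s (s z) != z -> t (s z) = s (s z).
Proof.
move=> tz ssz; case: (sym_monomial_step (s z)) => // tsz; rewrite permK in tsz.
have z_sz : z != s z by apply: contraNneq ssz => zE; rewrite -!zE.
have count_t : (2 <= #|[set i | [set i; t i] == [set z; s z]]|)%N.
  have <- : #|[set z; s z]| = 2 by rewrite cards2 z_sz.
  apply: subset_leq_card; apply/subsetP => i.
  by case/set2P => ->; rewrite inE ?tz // tsz setUC.
have count_s : (#|[set i | [set i; s i] == [set z; s z]]| <= 1)%N.
  rewrite -(cards1 z); apply: subset_leq_card; apply/subsetP => i.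
  rewrite !inE => /eqP/set2_inj[[-> _] // | [-> siz]].
  by rewrite siz eqxx in ssz.
have count u : sym_monomial u [set z; s z] = #|[set i | [set i; u i] == [set z; s z]]|.
  by rewrite ffunE.
by move: count_t; rewrite -count -st count ltnNge count_s.
Qed.

Lemma sym_monomial_cycle x :
  t x = s x -> s (s x) != x -> {in porbit s x, t =1 s}.
Proof.
move=> tx ssx _ /porbitP[k ->]; elim: k => [|k IHk]; first by rewrite expg0 perm1.
rewrite expgSr permM; apply: sym_monomial_next => //.
have -> : s (s ((s ^+ k) x)) = (s ^+ k) (s (s x)).
  have -> : s (s ((s ^+ k) x)) = (s ^+ k.+2) x by rewrite !expgSr !permM.
  by rewrite !expgS !permM.
by rewrite (inj_eq perm_inj).
Qed.

Lemma sym_monomial_reverse_cycles : exists S, t = reverse_cycles s S.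
Proof.
exists [set C in porbits s | [exists y in C, t y != s y]]; apply/permP => x.
rewrite reverse_cyclesE inE imset_f //=.
case: ifP => [/existsP[y /andP[yx ty]] | /negbT agree].
  case: (sym_monomial_step x) => [tx|//].
  have [ssx|ssx] := eqVneq (s (s x)) x; first by rewrite tx -{2}ssx permK.
  by rewrite (sym_monomial_cycle tx ssx yx) eqxx in ty.
apply/eqP; apply: contraNT agree => txs; apply/existsP.
by exists x; rewrite porbit_id txs.
Qed.

End SameMonomial.

Lemma sym_monomial_eq_similar s t :
  sym_monomial s = sym_monomial t <-> cycle_similar s t.
Proof.
split=> [st | /cycle_similarP[S ->]]; last by rewrite sym_monomial_reverse.
by apply/cycle_similarP; apply: sym_monomial_reverse_cycles.
Qed.

End ReverseCycles.

Local Open Scope ring_scope.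

Theorem proposition1 (R : realFieldType) (n : nat) (A : 'M[R]_n) :
  A^T = A ->
  (sym_trop_singular A <->
   exists s t : 'S_n,
     [/\ realizes_tdet A s, realizes_tdet A t & cycle_distinct s t]).
Proof.
move=> _; split=> -[s [t [realizes_s realizes_t differ]]]; exists s, t; split => //.
  by move=> /sym_monomial_eq_similar same; rewrite same eqxx in differ.
by apply/eqP => /sym_monomial_eq_similar.
Qed.
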